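(* Let $m\ge 2$ be an integer and let $a\in\mathbb{R}\setminus\mathbb{Z}^-$, where $\mathbb{Z}^-=\{k\in\mathbb{Z}: k\le 0\}$. Let $\mathcal{H}_\infty=(\mathcal{H}_{i_1\cdots i_m})$ be the $m$-order infinite dimensional generalized Hilbert tensor with entries $$\mathcal{H}_{i_1 i_2\cdots i_m}=\frac{1}{i_1+i_2+\cdots+i_m-m+a},\qquad i_1,\dots,i_m\in\{1,2,3,\dots\}.$$ Then for every $x=(x_i)_{i=1}^\infty\in l^1$: (i) the series $$\mathcal{H}_\infty x^m=\sum_{i_1,\dots,i_m=1}^\infty \frac{x_{i_1}x_{i_2}\cdots x_{i_m}}{i_1+i_2+\cdots+i_m-m+a}$$ converges absolutely; in particular $|\mathcal{H}_\infty x^m|<\infty$; (ii) for every positive integer $i$, the series $$(\mathcal{H}_\infty x^{m-1})_i=\sum_{i_2,\dots,i_m=1}^\infty \frac{x_{i_2}\cdots x_{i_m}}{i+i_2+\cdots+i_m-m+a}$$ converges absolutely, so that the infinite vector $\mathcal{H}_\infty x^{m-1}$ is well defined.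
   Context: $l^1$ denotes the space of real sequences $x=(x_i)_{i=1}^\infty$ with $\sum_{i=1}^\infty|x_i|<\infty$. Since $a\notin\mathbb{Z}^-$ and $i_1+\cdots+i_m-m$ is a nonnegative integer, all denominators are nonzero. *)

From HB Require Import structures.
From mathcomp Require Import all_boot all_order all_algebra.
From mathcomp Require Import all_classical all_reals all_analysis.
Set Implicit Arguments. Unset Strict Implicit. Unset Printing Implicit Defensive.
Import Order.TTheory GRing.Theory Num.Theory.
Local Open Scope ring_scope.
Local Open Scope classical_set_scope.

(* Sequences x = (x_i)_{i>=1} are functions nat -> R; the value at 0 is
   irrelevant.  Multi-indices (i_1,...,i_k) are finite functions 'I_k -> nat,
   restricted to positive entries. *)

Definition pos_idx (k : nat) : set {ffun 'I_k -> nat} :=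
  [set i | forall j, (0 < i j)%N].

Definition in_l1 (R : realType) (x : nat -> R) : Prop :=
  summable [set i : nat | (0 < i)%N] (fun i => (x i)%:E).

Definition hilbert_entry (R : realType) (m : nat) (a : R)
    (i : {ffun 'I_m -> nat}) : R :=
  ((\sum_(j < m) (i j)%:R) - m%:R + a)^-1.

Definition Hxm_term (R : realType) (m : nat) (a : R) (x : nat -> R)
    (i : {ffun 'I_m -> nat}) : R :=
  hilbert_entry a i * \prod_(j < m) x (i j).

(* general term of (H x^{m-1})_i, indices (i_2,...,i_m) : 'I_(m-1) -> nat *)
Definition Hxm1_term (R : realType) (m : nat) (a : R) (x : nat -> R)
    (i : nat) (i' : {ffun 'I_m.-1 -> nat}) : R :=
  (i%:R + (\sum_(j < m.-1) (i' j)%:R) - m%:R + a)^-1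
  * \prod_(j < m.-1) x (i' j).

Arguments pos_idx : clear implicits.
Arguments in_l1 {R} x.
Arguments hilbert_entry {R} m a i.
Arguments Hxm_term {R} m a x i.
Arguments Hxm1_term {R} m a x i i'.

(* Every entry of the tensor has the form 1/(n + a - m) with n a natural
   number; these values tend to 0, so they are bounded by some C.  A finite
   family of multi-indices lies in a box {0..n}^k, and expanding the product
   of k partial sums of sum |x_i| over that box shows that its contribution
   to sum |H x^k| is at most C (sum |x_i|)^k.  This bounds every finite
   partial sum, which is summability; the same argument applies to the
   (m-1)-fold sums defining (H x^(m-1))_i. *)
From HB Require Import structures.
From mathcomp Require Import all_boot all_order all_algebra.
From mathcomp Require Import all_classical all_reals all_analysis.
From mathcomp Require Import lra.
Import Order.TTheory GRing.Theory Num.Theory.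
Local Open Scope ring_scope.
Local Open Scope classical_set_scope.

Section Bounds.
Context {R : realType}.

Lemma bounded_inv_natrD (b : R) :
  exists C : R, forall n : nat, `|(n%:R + b)^-1| <= C.
Proof.
have [K hK] : exists K : nat, `|b| + 1 < K%:R.
  by exists (Num.Def.archi_bound (`|b| + 1)); rewrite archi_boundP ?addr_ge0.
exists (1 + \sum_(n < K) `|(n%:R + b)^-1|) => n.
have sum_ge0 : 0 <= \sum_(n < K) `|(n%:R + b)^-1| :> R by rewrite sumr_ge0.
have [ltnK | leKn] := ltnP n K.
  by rewrite (bigD1 (Ordinal ltnK)) //= addrA ler_wpDr ?sumr_ge0 ?ler_wpDl.
have ge1 : 1 <= n%:R + b.
  have : K%:R <= n%:R :> R by rewrite ler_nat.
  have := ler_norm (- b); rewrite normrN; lra.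
rewrite ger0_norm ?invr_ge0; last by lra.
by rewrite ler_wpDr // invf_le1 //; lra.
Qed.

Lemma in_l1_partial_sums_bounded (x : nat -> R) :
  in_l1 x -> exists M : R, forall N, \sum_(n < N) `|x n| <= M.
Proof.
rewrite /in_l1 /summable; set E := esum _ _ => Eoo.
have E_fin : E \is a fin_num.
  by rewrite fin_numElt Eoo andbT (lt_le_trans (ltNyr 0)) ?esum_ge0.
exists (`|x 0%N| + fine E) => N.
have tail_le : \sum_(0 <= n < N.+1 | (0 < n)%N) `|x n| <= fine E.
  rewrite -lee_fin -sumEFin fineK // /E -nneseries_esum //.
  exact: nneseries_lim_ge.
apply: le_trans (_ : \sum_(n < N.+1) `|x n| <= _).
  by rewrite big_ord_recr /= lerDl.
rewrite big_ord_recl lerD2l; apply: le_trans tail_le.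
by rewrite [leRHS]big_mkcond [leRHS]big_nat_recl //= add0r big_mkord.
Qed.

Lemma summable_of_bounded_sums (T : choiceType) (D : set T) (f : T -> R)
    (B : R) :
  (forall s : seq T, uniq s -> \sum_(i <- s) `|f i| <= B) ->
  summable D (fun i => (f i)%:E).
Proof.
move=> sum_le; apply: (@le_lt_trans _ _ B%:E); last exact: ltry.
apply: ge_ereal_sup => _ [X [finX _] <-].
by rewrite fsbig_finite //= sumEFin lee_fin sum_le ?finmap.fset_uniq.
Qed.

(* The multi-indices in s take values in 'I_n.+1, and summing the product
   over all of {ffun 'I_k -> 'I_n.+1} factors as a k-th power of a partial
   sum of f. *)
Lemma sum_prod_le_expr (f : nat -> R) (M : R) (k : nat)
    (s : seq {ffun 'I_k -> nat}) :
  (forall n, 0 <= f n) -> (forall N, \sum_(n < N) f n <= M) -> uniq s ->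
  \sum_(i <- s) \prod_(j < k) f (i j) <= M ^+ k.
Proof.
move=> f_ge0 sum_leM s_uniq.
pose n := (\max_(i <- s) \max_(j < k) i j)%N.
pose clip (i : {ffun 'I_k -> nat}) : {ffun 'I_k -> 'I_n.+1} :=
  [ffun j => inord (i j)].
pose F (g : {ffun 'I_k -> 'I_n.+1}) := \prod_(j < k) f (g j).
have lt_n1 : {in s, forall (i : {ffun 'I_k -> nat}) j, (i j < n.+1)%N}.
  move=> i i_s j; rewrite ltnS.
  apply: (bigmaxn_sup_seq (P := predT) i i_s isT).
  exact: (leq_bigmax (F := fun j => i j)).
have F_clip : {in s, forall i, F (clip i) = \prod_(j < k) f (i j)}.
  by move=> i i_s; apply: eq_bigr => j _; rewrite ffunE inordK ?lt_n1.
have clip_inj : {in s &, injective clip}.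
  move=> i1 i2 i1_s i2_s eq12; apply/ffunP => j.
  have := congr1 (fun g : {ffun 'I_k -> 'I_n.+1} => val (g j)) eq12.
  by rewrite /= !ffunE !inordK ?lt_n1.
rewrite -(eq_big_seq _ F_clip) -(big_map clip predT F) /=.
apply: le_trans (_ : \sum_g F g <= _).
  rewrite big_uniq ?map_inj_in_uniq //.
  rewrite [leRHS](bigID (mem (map clip s))) /= lerDl sumr_ge0 // => g _.
  exact: prodr_ge0.
rewrite /F -(bigA_distr_bigA (fun (j : 'I_k) (l : 'I_n.+1) => f l)) /=.
rewrite -[X in M ^+ X]card_ord -prodr_const; apply: ler_prod => j _.
by rewrite sumr_ge0 //= sum_leM.
Qed.

Lemma summable_bounded_coef_prod (k : nat) (c : {ffun 'I_k -> nat} -> R)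
    (C : R) (x : nat -> R) (D : set {ffun 'I_k -> nat}) :
  in_l1 x -> (forall i, `|c i| <= C) ->
  summable D (fun i => (c i * \prod_(j < k) x (i j))%:E).
Proof.
move=> /in_l1_partial_sums_bounded [M sum_leM] c_leC.
have C_ge0 : 0 <= C := le_trans (normr_ge0 _) (c_leC [ffun=> 0%N]).
apply: (@summable_of_bounded_sums _ _ _ (C * M ^+ k)) => s s_uniq.
apply: le_trans (_ : \sum_(i <- s) C * \prod_(j < k) `|x (i j)| <= _).
  apply: ler_sum => i _.
  by rewrite normrM normr_prod ler_wpM2r ?prodr_ge0.
rewrite -mulr_sumr ler_wpM2l //.
by apply: (sum_prod_le_expr (fun n => `|x n|)).
Qed.

End Bounds.

Theorem proposition1p1 (R : realType) (m : nat) (a : R)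
  (hm : (2 <= m)%N)
  (ha : forall k : int, k <= 0 -> a != k%:~R)
  (x : nat -> R) (hx : in_l1 x) :
  summable (pos_idx m) (fun i => (Hxm_term m a x i)%:E) /\
  (forall i : nat, (0 < i)%N ->
     summable (pos_idx m.-1) (fun i' => (Hxm1_term m a x i i')%:E)).
Proof.
have [C hC] : exists C : R, forall n : nat, `|(n%:R - m%:R + a)^-1| <= C.
  have [C hC] := bounded_inv_natrD (a - m%:R).
  by exists C => n; rewrite -addrA (addrC (- _)).
split=> [|i _].
  apply: (summable_bounded_coef_prod _ (hilbert_entry m a) C _ _ hx) => i.
  by rewrite /hilbert_entry -natr_sum.
apply: (summable_bounded_coef_prod _
  (fun i' => (i%:R + \sum_(j < m.-1) (i' j)%:R - m%:R + a)^-1) C _ _ hx).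
by move=> i'; rewrite -natr_sum -natrD.
Qed.
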